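(* Let $\mathcal{E}=\{\eta_i,\rho_i\}_{i=1}^n$ be an $m$-party quantum state ensemble and let $x\in\{1,\dots,n\}$. Then $p_{\sf L}(\mathcal{E})=\eta_x$ if and only if $\eta_x\rho_x-\eta_i\rho_i\in\mathbb{SEP}^*$ for all $i=1,\dots,n$. Moreover, in this case $p_{\sf L}(\mathcal{E})=p_{\sf SEP}(\mathcal{E})$.
   Context: Let $\mathcal{H}=\bigotimes_{k=1}^m\mathbb{C}^{d_k}$ with $m,d_1,\dots,d_m\ge 2$, shared among parties $\mathsf{A}_1,\dots,\mathsf{A}_m$ (party $\mathsf{A}_k$ holds the factor $\mathbb{C}^{d_k}$). $\mathbb{H}$ denotes the Hermitian operators on $\mathcal{H}$, $\mathbb{H}_+$ the positive semidefinite ones. A state is $\rho\in\mathbb{H}_+$ with $\operatorname{Tr}\rho=1$; a measurement is a family $\{M_i\}\subseteq\mathbb{H}_+$ with $\sum_i M_i=\mathbb{1}$. An operator $E\in\mathbb{H}_+$ is separable if $E=\sum_s\bigotimes_{k=1}^m E_{s,k}$ with each $E_{s,k}$ positive semidefinite on $\mathbb{C}^{d_k}$; $\mathbb{SEP}$ is the set of separable operators. $E\in\mathbb{H}$ is block positive if $\operatorname{Tr}(E\sigma)\ge 0$ for every separable state $\sigma$; $\mathbb{SEP}^*$ is the set of block-positive operators. A measurement is separable if all its elements are separable, and LOCC if it can be realized by local operations and classical communication among $\mathsf{A}_1,\dots,\mathsf{A}_m$. An ensemble $\mathcal{E}=\{\eta_i,\rho_i\}_{i=1}^n$ consists of states $\rho_i$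 with nonzero probabilities $\eta_i$ summing to $1$. For a measurement $\{M_i\}_{i=1}^n$ the success probability is $\sum_i\eta_i\operatorname{Tr}(\rho_iM_i)$; $p_{\sf G}(\mathcal{E})$, $p_{\sf SEP}(\mathcal{E})$, $p_{\sf L}(\mathcal{E})$ denote its maximum over all measurements, all separable measurements, and all LOCC measurements, respectively. *)

From HB Require Import structures.
From mathcomp Require Import all_boot all_order all_algebra.
From mathcomp Require Import complex.
From mathcomp Require Import classical_sets reals.
Set Implicit Arguments.
Unset Strict Implicit.
Unset Printing Implicit Defensive.
Import Order.TTheory GRing.Theory Num.Theory.
Local Open Scope ring_scope.
Local Open Scope complex_scope.

Section QDefs.
Variable R : realType.
Local Notation C := R[i].

Definition op (I : finType) := I -> I -> C.

Definition op0 (I : finType) : op I := fun _ _ => 0.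
Definition op1 (I : finType) : op I := fun i j => (i == j)%:R.
Definition opadd (I : finType) (A B : op I) : op I := fun i j => A i j + B i j.
Definition opsum (I : finType) (J : finType) (F : J -> op I) : op I :=
  fun i j => \sum_(s : J) F s i j.
Definition opmul (I : finType) (A B : op I) : op I :=
  fun i j => \sum_(l : I) A i l * B l j.
Definition adj (I : finType) (A : op I) : op I := fun i j => (A j i)^*.
Definition trace (I : finType) (A : op I) : C := \sum_(i : I) A i i.

Definition herm (I : finType) (A : op I) : Prop := forall i j, A j i = (A i j)^*.
Definition psd (I : finType) (A : op I) : Prop :=
  herm A /\ forall v : I -> C, 0 <= \sum_(i : I) \sum_(j : I) (v i)^* * A i j * v j.

(* Multipartite Hilbert space  C^{d_1} (x) ... (x) C^{d_m}: basis indexed by tuples *)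
Definition idx (m : nat) (d : 'I_m -> nat) : finType :=
  {dffun forall k : 'I_m, 'I_(d k)}.

Definition tens (m : nat) (d : 'I_m -> nat) (A : forall k : 'I_m, op 'I_(d k))
  : op (idx d) := fun i j => \prod_(k : 'I_m) A k (i k) (j k).

(* local operator K acting on party k, identity on the others: 1 (x) .. K .. (x) 1 *)
Definition embed (m : nat) (d : 'I_m -> nat) (k : 'I_m) (K : op 'I_(d k))
  : op (idx d) :=
  fun i j => K (i k) (j k) * \prod_(l : 'I_m | l != k) (i l == j l)%:R.

Definition separable (m : nat) (d : 'I_m -> nat) (E : op (idx d)) : Prop :=
  exists (S : nat) (F : 'I_S -> forall k : 'I_m, op 'I_(d k)),
    (forall s k, psd (F s k)) /\ E = opsum (fun s => tens (F s)).

Definition is_state (I : finType) (rho : op I) : Prop := psd rho /\ trace rho = 1.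

Definition block_positive (m : nat) (d : 'I_m -> nat) (E : op (idx d)) : Prop :=
  herm E /\ forall sigma : op (idx d), separable sigma -> is_state sigma ->
    0 <= trace (opmul E sigma).

Definition ensemble (I : finType) (n : nat) (eta : 'I_n -> R) (rho : 'I_n -> op I)
  : Prop :=
  (forall i, 0 < eta i) /\ \sum_(i < n) eta i = 1 /\ (forall i, is_state (rho i)).

Definition measurement (I : finType) (n : nat) (M : 'I_n -> op I) : Prop :=
  (forall i, psd (M i)) /\ opsum M = @op1 I.

Definition sep_measurement (m : nat) (d : 'I_m -> nat) (n : nat)
  (M : 'I_n -> op (idx d)) : Prop :=
  measurement M /\ forall i, separable (M i).

(* LOCC protocols (finite number of rounds): at each node some party k performs a
   local quantum instrument with Kraus operators K_0..K_{J-1} on C^{d_k},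
   broadcasts the outcome j, and the protocol continues with next j; leaves
   carry the final guess. *)
Inductive locc_proto (m : nat) (d : 'I_m -> nat) (n : nat) : Type :=
| LLeaf of 'I_n
| LNode (k : 'I_m) (J : nat) of ('I_J -> op 'I_(d k)) & ('I_J -> locc_proto d n).

Fixpoint locc_valid (m : nat) (d : 'I_m -> nat) (n : nat) (p : locc_proto d n)
  : Prop :=
  match p with
  | LLeaf _ => True
  | LNode k J K next =>
      opsum (fun j => opmul (adj (K j)) (K j)) = @op1 'I_(d k) /\
      forall j, locc_valid (next j)
  end.

Fixpoint locc_effect (m : nat) (d : 'I_m -> nat) (n : nat) (p : locc_proto d n)
  (i : 'I_n) : op (idx d) :=
  match p with
  | LLeaf l => if l == i then @op1 (idx d) else @op0 (idx d)
  | LNode k J K next =>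
      opsum (fun j => opmul (adj (embed (K j)))
                            (opmul (locc_effect (next j) i) (embed (K j))))
  end.

Definition locc_measurement (m : nat) (d : 'I_m -> nat) (n : nat)
  (M : 'I_n -> op (idx d)) : Prop :=
  exists p : locc_proto d n, locc_valid p /\ forall i, M i = locc_effect p i.

Definition success (I : finType) (n : nat) (eta : 'I_n -> R) (rho M : 'I_n -> op I)
  : C := \sum_(i < n) (eta i)%:C * trace (opmul (rho i) (M i)).

Definition p_G (I : finType) (n : nat) (eta : 'I_n -> R) (rho : 'I_n -> op I) : R :=
  sup [set r : R | exists M, measurement M /\ success eta rho M = r%:C]%classic.

Definition p_SEP (m : nat) (d : 'I_m -> nat) (n : nat) (eta : 'I_n -> R)
  (rho : 'I_n -> op (idx d)) : R :=
  sup [set r : R | exists M, sep_measurement M /\ success eta rho M = r%:C]%classic.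

Definition p_L (m : nat) (d : 'I_m -> nat) (n : nat) (eta : 'I_n -> R)
  (rho : 'I_n -> op (idx d)) : R :=
  sup [set r : R | exists M, locc_measurement M /\ success eta rho M = r%:C]%classic.

End QDefs.

(* If every [eta_x rho_x - eta_i rho_i] is block positive, the success probability
   of a separable measurement {M_i} is [eta_x - sum_i Tr((eta_x rho_x - eta_i rho_i) M_i)
   <= eta_x], and the LOCC measurement "always guess x" attains [eta_x]; as LOCC
   measurements are separable, [p_L = p_SEP = eta_x].  Conversely, if [p_L = eta_x],
   take a product vector [w = w_1 (x) ... (x) w_m]: the parties measure the
   projections onto their [w_k] one after the other, and the protocol guesses [i]
   if all of them click and [x] otherwise.  Its success probability is
   [eta_x - Tr((eta_x rho_x - eta_i rho_i) P_w)], so this trace is nonnegative;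
   by the spectral theorem every separable operator is a nonnegative combination
   of such projections, whence block positivity. *)

From HB Require Import structures.
From mathcomp Require Import all_boot all_order all_algebra.
From mathcomp Require Import complex.
From mathcomp Require Import classical_sets reals.
From mathcomp Require Import ring spectral.
Import Order.TTheory GRing.Theory Num.Theory.
Local Open Scope ring_scope.
Local Open Scope complex_scope.

Set Implicit Arguments.
Unset Strict Implicit.
Unset Printing Implicit Defensive.

Local Notation opconj K A := (opmul (adj K) (opmul A K)).

Section OperatorAlgebra.
Variable R : realType.
Local Notation C := R[i].

Definition opsub (I : finType) (A B : op R I) : op R I := fun a b => A a b - B a b.

Lemma op_ext (I : finType) (A B : op R I) : (forall i j, A i j = B i j) -> A = B.
Proof. by move=> AB; apply: boolp.funext => i; apply: boolp.funext => j; apply: AB. Qed.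

Lemma opmul1l (I : finType) (A : op R I) : opmul (@op1 R I) A = A.
Proof.
apply: op_ext => i j; rewrite /opmul /op1 (bigD1 i) //= eqxx mul1r big1 ?addr0 //.
by move=> a /negbTE ai; rewrite eq_sym ai mul0r.
Qed.

Lemma opmul1r (I : finType) (A : op R I) : opmul A (@op1 R I) = A.
Proof.
apply: op_ext => i j; rewrite /opmul /op1 (bigD1 j) //= eqxx mulr1 big1 ?addr0 //.
by move=> a /negbTE ->; rewrite mulr0.
Qed.

Lemma exchange_opsum (I J K : finType) (F : J -> K -> op R I) :
  opsum (fun j => opsum (F j)) = opsum (fun k => opsum (fun j => F j k)).
Proof. by apply: op_ext => a b; rewrite /opsum exchange_big. Qed.

Lemma opconj_opsum (I J : finType) (K : op R I) (F : J -> op R I) :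
  opconj K (opsum F) = opsum (fun s => opconj K (F s)).
Proof.
apply: op_ext => i j; rewrite /opmul /opsum.
under eq_bigr do under eq_bigr do rewrite mulr_suml.
under eq_bigr do rewrite exchange_big mulr_sumr.
by rewrite exchange_big.
Qed.

Lemma opconj0 (I : finType) (K : op R I) : opconj K (@op0 R I) = @op0 R I.
Proof.
apply: op_ext => i j; rewrite /opmul /op0 big1 // => a _.
by rewrite big1 ?mulr0 // => b _; rewrite mul0r.
Qed.

Lemma opconj_sub (I : finType) (A B K : op R I) :
  opconj K (opsub A B) = opsub (opconj K A) (opconj K B).
Proof.
apply: op_ext => a b; rewrite /opmul /opsub -sumrB; apply: eq_bigr => l _.
by rewrite -mulrBr -sumrB; congr (_ * _); apply: eq_bigr => l' _; rewrite mulrBl.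
Qed.

Lemma trace_mul_opsumr (I J : finType) (X : op R I) (F : J -> op R I) :
  trace (opmul X (opsum F)) = \sum_(s : J) trace (opmul X (F s)).
Proof.
rewrite /trace /opmul /opsum.
under eq_bigr do under eq_bigr do rewrite mulr_sumr.
by rewrite [RHS]exchange_big; apply: eq_bigr => a _; rewrite [RHS]exchange_big.
Qed.

Lemma trace_mulBl (I : finType) (c1 c2 : C) (A B M : op R I) :
  trace (opmul (fun a b => c1 * A a b - c2 * B a b) M) =
  c1 * trace (opmul A M) - c2 * trace (opmul B M).
Proof.
rewrite /trace /opmul !mulr_sumr -sumrB; apply: eq_bigr => a _.
rewrite !mulr_sumr -sumrB; apply: eq_bigr => b _.
by rewrite mulrBl !mulrA.
Qed.

Lemma trace_mulZr (I : finType) (c : C) (A B : op R I) :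
  trace (opmul A (fun a b => c * B a b)) = c * trace (opmul A B).
Proof.
rewrite /trace /opmul mulr_sumr; apply: eq_bigr => a _.
by rewrite mulr_sumr; apply: eq_bigr => b _; rewrite mulrCA.
Qed.

Lemma trace_mul1r (I : finType) (A : op R I) : trace (opmul A (@op1 R I)) = trace A.
Proof. by rewrite opmul1r. Qed.

Lemma trace_mul0r (I : finType) (A : op R I) : trace (opmul A (@op0 R I)) = 0.
Proof.
by rewrite /trace /opmul /op0 big1 // => a _; rewrite big1 // => b _; rewrite mulr0.
Qed.

Lemma trace_mul_sub1r (I : finType) (A B : op R I) :
  trace (opmul A (opsub (@op1 R I) B)) = trace A - trace (opmul A B).
Proof.
rewrite -[trace A]trace_mul1r /trace /opmul -sumrB; apply: eq_bigr => a _.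
by rewrite -sumrB; apply: eq_bigr => b _; rewrite mulrBr.
Qed.

Lemma trace_mul_herm_real (I : finType) (A B : op R I) :
  herm A -> herm B -> trace (opmul A B) \is Num.real.
Proof.
move=> hA hB; suff conj_tr : conjc (trace (opmul A B)) = trace (opmul A B).
  by apply/CrealP.
rewrite /trace /opmul rmorph_sum /=; under eq_bigr do rewrite rmorph_sum /=.
rewrite exchange_big /=; apply: eq_bigr => a _; apply: eq_bigr => b _.
by rewrite rmorphM /= -(hA b a) -(hB a b).
Qed.

End OperatorAlgebra.

Section Positivity.
Variable R : realType.
Local Notation C := R[i].

Lemma conjc_ge0 (c : C) : 0 <= c -> c^* = c.
Proof. by move=> c_ge0; apply: conj_Creal; apply: ger0_real. Qed.

Lemma psd_op1 (I : finType) : psd (@op1 R I).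
Proof.
split; first by move=> i j; rewrite /op1 conjc_nat eq_sym.
move=> v; apply: sumr_ge0 => i _.
rewrite (bigD1 i) //= /op1 eqxx mulr1 big1 ?addr0; last first.
  by move=> j /negbTE ji; rewrite eq_sym ji mulr0 mul0r.
by rewrite mulrC; apply: mulcJ_ge0.
Qed.

Lemma psd_op0 (I : finType) : psd (@op0 R I).
Proof.
split; first by move=> i j; rewrite /op0 conjc0.
by move=> v; apply: sumr_ge0 => i _; apply: sumr_ge0 => j _; rewrite /op0 mulr0 mul0r.
Qed.

Lemma psd_opconj (I : finType) (A K : op R I) : psd A -> psd (opconj K A).
Proof.
move=> [hA qA]; split.
  move=> i j; rewrite /opmul /adj rmorph_sum /=.
  under [RHS]eq_bigr do rewrite rmorphM /= conjcK rmorph_sum /=.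
  under eq_bigr do rewrite mulr_sumr.
  under [RHS]eq_bigr do rewrite mulr_sumr.
  rewrite [RHS]exchange_big /=; apply: eq_bigr => a _; apply: eq_bigr => b _.
  by rewrite rmorphM /= -hA; ring.
move=> v; have := qA (fun a => \sum_i K a i * v i).
have -> : \sum_a \sum_b (\sum_i K a i * v i)^* * A a b * (\sum_i K b i * v i) =
  \sum_a \sum_b \sum_i \sum_j (v i)^* * (K a i)^* * A a b * K b j * v j.
  apply: eq_bigr => a _; apply: eq_bigr => b _.
  rewrite rmorph_sum /= !mulr_suml; apply: eq_bigr => i _.
  by rewrite mulr_sumr; apply: eq_bigr => j _; rewrite rmorphM /=; ring.
have -> : \sum_i \sum_j (v i)^* * (opconj K A) i j * v j =
  \sum_i \sum_j \sum_a \sum_b (v i)^* * (K a i)^* * A a b * K b j * v j.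
  apply: eq_bigr => i _; apply: eq_bigr => j _.
  rewrite /opmul /adj mulr_sumr mulr_suml; apply: eq_bigr => a _.
  by rewrite !mulr_sumr !mulr_suml; apply: eq_bigr => b _; ring.
move/le_trans; apply; rewrite le_eqVlt; apply/orP; left; apply/eqP.
under eq_bigr do rewrite exchange_big /=.
under eq_bigr do under eq_bigr do rewrite exchange_big /=.
by rewrite exchange_big /=; under eq_bigr do rewrite exchange_big /=.
Qed.

Lemma psd_nonneg_comb (I : finType) n (c : 'I_n -> C) (E : 'I_n -> op R I) :
  (forall j, 0 <= c j) -> (forall j, psd (E j)) ->
  psd (opsum (fun j a b => c j * E j a b)).
Proof.
move=> c_ge0 psdE; split.
  move=> a b; rewrite /opsum rmorph_sum; apply: eq_bigr => j _.
  by rewrite rmorphM /= conjc_ge0 //; case: (psdE j) => -> _.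
move=> v.
have -> : \sum_i \sum_j (v i)^* * opsum (fun j a b => c j * E j a b) i j * v j =
    \sum_s c s * \sum_i \sum_j (v i)^* * E s i j * v j.
  rewrite /opsum.
  under eq_bigr do under eq_bigr do rewrite mulr_sumr mulr_suml.
  under eq_bigr do rewrite exchange_big /=.
  rewrite exchange_big /=; apply: eq_bigr => s _.
  rewrite mulr_sumr; apply: eq_bigr => i _; rewrite mulr_sumr.
  by apply: eq_bigr => j _; ring.
by apply: sumr_ge0 => s _; apply: mulr_ge0 => //; case: (psdE s).
Qed.

Lemma psd_scale (I : finType) (c : C) (A : op R I) : 0 <= c -> psd A ->
  psd (fun a b => c * A a b).
Proof.
move=> c_ge0 psdA; have := @psd_nonneg_comb I 1 (fun=> c) (fun=> A).
have -> : opsum (fun (_ : 'I_1) a b => c * A a b) = fun a b => c * A a b.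
  by apply: op_ext => a b; rewrite /opsum big_ord1.
by apply.
Qed.

Definition rk1 (I : finType) (w : I -> C) : op R I := fun a b => w a * (w b)^*.

Lemma psd_rk1 (I : finType) (w : I -> C) : psd (rk1 w).
Proof.
split; first by move=> i j; rewrite /rk1 rmorphM /= conjcK mulrC.
move=> v.
have -> : \sum_i \sum_j (v i)^* * rk1 w i j * v j =
    (\sum_i (v i)^* * w i) * (\sum_i (v i)^* * w i)^*.
  rewrite mulr_suml; apply: eq_bigr => i _; rewrite rmorph_sum mulr_sumr.
  by apply: eq_bigr => j _; rewrite /rk1 rmorphM /= conjCK; ring.
exact: mulcJ_ge0.
Qed.

Lemma rk1_eq0 (I : finType) (w : I -> C) :
  \sum_a w a * (w a)^* = 0 -> rk1 w = @op0 R I.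
Proof.
move=> norm0; have w0 a : w a = 0.
  have /eqP := @psumr_eq0P _ _ predT _ (fun a _ => mulcJ_ge0 (w a)) norm0 a isT.
  by rewrite mulf_eq0 conjc_eq0 orbb => /eqP.
by apply: op_ext => a b; rewrite /rk1 /op0 w0 mul0r.
Qed.

Lemma projector_normalized_rk1 (I : finType) (w : I -> C) N :
  \sum_l w l * (w l)^* = N -> N != 0 ->
  let P := fun a b => N^-1 * rk1 w a b in adj P = P /\ opmul P P = P.
Proof.
move=> normw N_neq0 P.
have N_ge0 : 0 <= N by rewrite -normw; apply: sumr_ge0 => l _; apply: mulcJ_ge0.
split; apply: op_ext => a b; rewrite /P /adj /rk1.
  by rewrite !rmorphM /= conjcK conjc_ge0 ?invr_ge0 //; ring.
rewrite /opmul.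
transitivity (N^-1 * (w a * (w b)^*) * (N^-1 * \sum_l w l * (w l)^*)).
  by rewrite !mulr_sumr; apply: eq_bigr => l _; ring.
by rewrite normw mulVf // mulr1.
Qed.

Lemma psd_spectral n (A : op R 'I_n) : psd A -> exists (lam : 'I_n -> C)
  (u : 'I_n -> 'I_n -> C), (forall j, 0 <= lam j) /\
  A = opsum (fun j a b => lam j * rk1 (u j) a b).
Proof.
move=> [hA qA].
pose M : 'M[C]_n := \matrix_(a, b) A a b.
have M_selfadj : map_mx Num.conj M^T = M.
  by apply/matrixP => a b; rewrite !mxE hA; apply: conjcK.
have M_normal : M \is normalmx by rewrite qualifE M_selfadj.
have /orthomx_spectralP := M_normal.
set P := spectralmx M; set s := spectral_diag M => eM.
have P_unitary : P \is unitarymx by apply: spectral_unitarymx.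
have PPt : P *m map_mx Num.conj P^T = 1%:M by apply/unitarymxP.
rewrite invmx_unitary // in eM.
have Aab a b : A a b = \sum_j (P j a)^* * s 0 j * P j b.
  have := congr1 (fun N : 'M[C]_n => N a b) eM; rewrite /= mxE => ->.
  rewrite !mxE; apply: eq_bigr => j _; rewrite !mxE.
  rewrite (bigD1 j) //= big1 ?addr0; last first.
    by move=> l /negbTE lj; rewrite !mxE lj mulr0n mulr0.
  by rewrite !mxE eqxx mulr1n.
exists (fun j => s 0 j), (fun j a => (P j a)^*); split; last first.
  apply: op_ext => a b; rewrite Aab /opsum; apply: eq_bigr => j _.
  by rewrite /rk1 conjCK; ring.
move=> j; have := qA (fun a => (P j a)^*).
have -> : \sum_a \sum_b ((P j a)^*)^* * A a b * (P j b)^* =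
    (P *m M *m map_mx Num.conj P^T) j j.
  rewrite mxE exchange_big; apply: eq_bigr => b _; rewrite mxE mulr_suml.
  by apply: eq_bigr => a _; rewrite !mxE conjCK.
by rewrite eM !mulmxA PPt mul1mx -mulmxA PPt mulmx1 mxE eqxx mulr1n.
Qed.

End Positivity.

Section Tensor.
Variable R : realType.
Local Notation C := R[i].
Variables (m : nat) (d : 'I_m -> nat).
Local Notation T := (forall k : 'I_m, op R 'I_(d k)).
Local Notation ones := (fun k : 'I_m => @op1 R 'I_(d k)).

Definition upd (i : idx d) (k : 'I_m) (u : 'I_(d k)) : idx d :=
  finfun (dfwith (fun l => i l) u).
Arguments upd i k u : clear implicits.

Lemma upd_eq (i : idx d) k u : upd i k u k = u.
Proof. by rewrite /upd ffunE dfwith_in. Qed.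

Lemma upd_neq (i : idx d) k u l : l != k -> upd i k u l = i l.
Proof. by move=> lk; rewrite /upd ffunE dfwith_out // eq_sym. Qed.

Lemma dfwith_self (F : T) k : dfwith F (F k) = F.
Proof. by apply: boolp.functional_extensionality_dep => l; case: dfwithP. Qed.

Lemma tens_dfwith (F : T) k (A : op R 'I_(d k)) i j :
  tens (dfwith F A) i j = A (i k) (j k) * \prod_(l | l != k) F l (i l) (j l).
Proof.
rewrite /tens (bigD1 k) //= dfwith_in; congr (_ * _).
by apply: eq_bigr => l lk; rewrite dfwith_out // eq_sym.
Qed.

Lemma tens_upd (F : T) k (i j : idx d) u v :
  tens F (upd i k u) (upd j k v) = F k u v * \prod_(l | l != k) F l (i l) (j l).
Proof.
rewrite /tens (bigD1 k) //= !upd_eq; congr (_ * _).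
by apply: eq_bigr => l lk; rewrite !upd_neq.
Qed.

Lemma prod_delta_upd k (i a : idx d) :
  \prod_(l | l != k) ((a l == i l)%:R : C) =
  \sum_(u : 'I_(d k)) ((a == upd i k u)%:R : C).
Proof.
case: (boolp.pselect (forall l, l != k -> a l = i l)) => [ai|].
  rewrite big1; last by move=> l lk; rewrite ai // eqxx.
  rewrite (bigD1 (a k)) //=.
  have -> : a == upd i k (a k).
    apply/eqP/ffunP => l; case: (eqVneq l k) => [->|lk]; first by rewrite upd_eq.
    by rewrite upd_neq // ai.
  rewrite big1 ?addr0 // => u uk; case: eqP => // au.
  by move: uk; rewrite au upd_eq eqxx.
move=> /boolp.existsNP [l0 /boolp.not_implyP [l0k al0]].
rewrite (bigD1 l0) //= (introF eqP al0) mul0r big1 // => u _.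
by case: eqP => // au; case: al0; rewrite au upd_neq.
Qed.

Lemma sum_delta_upd k (i : idx d) (g : idx d -> C) :
  \sum_(a : idx d) (\prod_(l | l != k) ((a l == i l)%:R : C)) * g a =
  \sum_(u : 'I_(d k)) g (upd i k u).
Proof.
under eq_bigr do rewrite prod_delta_upd mulr_suml.
rewrite exchange_big /=; apply: eq_bigr => u _.
rewrite (bigD1 (upd i k u)) //= eqxx mul1r big1 ?addr0 // => a /negbTE ->.
by rewrite mul0r.
Qed.

Lemma opconj_embed_tens (F : T) k (K : op R 'I_(d k)) :
  opconj (embed K) (tens F) = tens (dfwith F (opconj K (F k))).
Proof.
apply: op_ext => i j; rewrite tens_dfwith /opmul /adj /embed.
transitivity (\sum_(a : idx d) (\prod_(l | l != k) ((a l == i l)%:R : C)) *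
   ((K (a k) (i k))^* * \sum_(b : idx d) (\prod_(l | l != k) ((b l == j l)%:R : C)) *
     (tens F a b * K (b k) (j k)))).
  apply: eq_bigr => a _; rewrite rmorphM /= rmorph_prod /=.
  under eq_bigr do rewrite conjc_nat.
  by rewrite !mulr_sumr; apply: eq_bigr => b _; ring.
rewrite sum_delta_upd mulr_suml; apply: eq_bigr => u _.
rewrite sum_delta_upd upd_eq !mulr_sumr mulr_suml; apply: eq_bigr => v _.
by rewrite upd_eq tens_upd; ring.
Qed.

Lemma tens_ones : tens ones = @op1 R (idx d).
Proof.
apply: op_ext => i j; rewrite /tens /op1.
have [->|ij] := eqVneq i j; first by rewrite big1 ?eqxx // => k _; rewrite eqxx.
have [k ijk] : exists k, i k != j k.
  apply: boolp.contrapT => eqij; case/eqP: ij; apply/ffunP => k; apply/eqP.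
  by apply: contraT => ijk; case: eqij; exists k.
by rewrite (bigD1 k) //= (negbTE ijk) mul0r; case: (@eqP _ i j).
Qed.

Lemma opconj_embed_op1 k (K : op R 'I_(d k)) :
  opconj (embed K) (@op1 R (idx d)) = tens (dfwith ones (opmul (adj K) K)).
Proof. by rewrite -{1}tens_ones opconj_embed_tens opmul1l. Qed.

Lemma tens_dfwith_opsum (F : T) k (J : finType) (G : J -> op R 'I_(d k)) :
  tens (dfwith F (opsum G)) = opsum (fun j => tens (dfwith F (G j))).
Proof.
apply: op_ext => i j; rewrite tens_dfwith /opsum mulr_suml.
by apply: eq_bigr => s _; rewrite tens_dfwith.
Qed.

Lemma tens_eq0 (F : T) k : F k = @op0 R _ -> tens F = @op0 R (idx d).
Proof. by move=> Fk0; apply: op_ext => i j; rewrite /tens (bigD1 k) //= Fk0 mul0r. Qed.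

Lemma psd_dfwith (F : T) k (A : op R 'I_(d k)) :
  (forall l, psd (F l)) -> psd A -> forall l, psd (dfwith F A l).
Proof. by move=> psdF psdA l; case: dfwithP. Qed.

Definition tensv (w : forall k, 'I_(d k) -> C) : idx d -> C :=
  fun i => \prod_k w k (i k).

Lemma tens_rk1 (w : forall k, 'I_(d k) -> C) :
  tens (fun k => rk1 (w k)) = rk1 (tensv w).
Proof. by apply: op_ext => i j; rewrite /tens /rk1 big_split /= rmorph_prod. Qed.

End Tensor.

Section Separable.
Variable R : realType.
Variables (m : nat) (d : 'I_m -> nat).
Local Notation T := (forall k : 'I_m, op R 'I_(d k)).
Local Notation ones := (fun k : 'I_m => @op1 R 'I_(d k)).

Lemma separable0 : separable (@op0 R (idx d)).
Proof.
exists 0%N, (fun _ => ones); split; first by case.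
by apply: op_ext => i j; rewrite /opsum big_ord0.
Qed.

Lemma separable_tens (F : T) : (forall k, psd (F k)) -> separable (tens F).
Proof.
move=> psdF; exists 1%N, (fun _ => F); split => //.
by apply: op_ext => i j; rewrite /opsum big_ord1.
Qed.

Lemma separable1 : separable (@op1 R (idx d)).
Proof. by rewrite -tens_ones; apply: separable_tens => k; apply: psd_op1. Qed.

Lemma separableD (A B : op R (idx d)) : separable A -> separable B ->
  separable (fun i j => A i j + B i j).
Proof.
move=> [S1 [F1 [psdF1 ->]]] [S2 [F2 [psdF2 ->]]].
exists (S1 + S2)%N, (fun s => match split s with inl a => F1 a | inr b => F2 b end).
split; first by move=> s k; case: (split s).
apply: op_ext => i j; rewrite /opsum big_split_ord /=.
congr (_ + _); apply: eq_bigr => s _.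
  by rewrite -[lshift _ s]/(unsplit (inl s)) unsplitK.
by rewrite -[rshift _ s]/(unsplit (inr s)) unsplitK.
Qed.

Lemma separable_opsum (J : nat) (F : 'I_J -> op R (idx d)) :
  (forall j, separable (F j)) -> separable (opsum F).
Proof.
elim: J F => [|J IH] F sepF.
  have -> : opsum F = @op0 R (idx d) by apply: op_ext => i j; rewrite /opsum big_ord0.
  exact: separable0.
have -> : opsum F = fun i j => opsum (fun s : 'I_J => F (widen_ord (leqnSn J) s)) i j
                               + F ord_max i j.
  by apply: op_ext => i j; rewrite /opsum big_ord_recr.
by apply: separableD => //; apply: IH => s; apply: sepF.
Qed.

Lemma separable_opconj_embed k (K : op R 'I_(d k)) (E : op R (idx d)) :
  separable E -> separable (opconj (embed K) E).
Proof.
move=> [S [F [psdF ->]]]; rewrite opconj_opsum.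
apply: separable_opsum => s; rewrite opconj_embed_tens; apply: separable_tens.
by apply: psd_dfwith => //; apply: psd_opconj.
Qed.

Lemma locc_effect_separable n (p : locc_proto R d n) i : separable (locc_effect p i).
Proof.
elim: p => [l|k J K next IH] /=.
  by case: eqP => _; [apply: separable1 | apply: separable0].
by apply: separable_opsum => j; apply: separable_opconj_embed.
Qed.

Lemma locc_effect_opsum n (p : locc_proto R d n) : locc_valid p ->
  opsum (locc_effect p) = @op1 R (idx d).
Proof.
elim: p => [l|k J K next IH] /=.
  move=> _; apply: op_ext => a b; rewrite /opsum (bigD1 l) //= eqxx big1 ?addr0 //.
  by move=> i /negbTE; rewrite eq_sym => ->.
move=> [completeK validnext]; rewrite exchange_opsum.
have -> : (fun j => opsum (fun i => opconj (embed (K j)) (locc_effect (next j) i))) =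
          (fun j => tens (dfwith ones (opmul (adj (K j)) (K j)))).
  apply: boolp.funext => j; rewrite -opconj_opsum IH //.
  exact: opconj_embed_op1.
by rewrite -tens_dfwith_opsum completeK dfwith_self tens_ones.
Qed.

End Separable.

Section BlockPositivity.
Variable R : realType.
Local Notation C := R[i].
Variables (m : nat) (d : 'I_m -> nat).
Local Notation T := (forall k : 'I_m, op R 'I_(d k)).

(* Spectral decomposition of the factors, one party at a time, reduces any
    property of the cone of separable operators to product rank-one operators. *)
Lemma cone_tens_psd (Pr : op R (idx d) -> Prop) :
  (forall n (c : 'I_n -> C) (E : 'I_n -> op R (idx d)),
    (forall j, 0 <= c j) -> (forall j, Pr (E j)) ->
    Pr (opsum (fun j a b => c j * E j a b))) ->
  (forall w : forall k, 'I_(d k) -> C, Pr (tens (fun k => rk1 (w k)))) ->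
  forall F : T, (forall k, psd (F k)) -> Pr (tens F).
Proof.
move=> Pr_comb Pr_rk1.
suff PrF : forall (ks : seq 'I_m) (F : T) (w : forall k, 'I_(d k) -> C),
    (forall k, psd (F k)) -> (forall k, k \notin ks -> F k = rk1 (w k)) ->
    Pr (tens F).
  by move=> F psdF; apply: (PrF (enum 'I_m) F (fun k a => 0)) => // k; rewrite mem_enum.
elim=> [|k ks IH] F w psdF Fw.
  have -> : F = (fun k => rk1 (w k)).
    by apply: boolp.functional_extensionality_dep => l; apply: Fw.
  exact: Pr_rk1.
have [lam [u [lam_ge0 eFk]]] := psd_spectral (psdF k).
rewrite -(dfwith_self F k) eFk tens_dfwith_opsum.
have -> : opsum (fun j => tens (dfwith F (fun a b => lam j * rk1 (u j) a b))) =
    opsum (fun j a b => lam j * tens (dfwith F (rk1 (u j))) a b).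
  by apply: op_ext => a b; apply: eq_bigr => j _; rewrite !tens_dfwith mulrA.
apply: Pr_comb => // j; apply: (IH _ (dfwith w (u j))).
  by apply: psd_dfwith => //; apply: psd_rk1.
move=> l lks; have [<-|kl] := eqVneq k l; first by rewrite !dfwith_in.
rewrite !dfwith_out //; apply: Fw.
by rewrite in_cons negb_or lks andbT eq_sym.
Qed.

Lemma trace_separable_ge0 (X : op R (idx d)) :
  (forall w, 0 <= trace (opmul X (rk1 (tensv w)))) ->
  forall M, separable M -> 0 <= trace (opmul X M).
Proof.
move=> X_rk1 M [S [F [psdF ->]]]; rewrite trace_mul_opsumr.
apply: sumr_ge0 => s _; apply: (cone_tens_psd (Pr := fun E => 0 <= trace (opmul X E))).
- move=> n c E c_ge0 XE; rewrite trace_mul_opsumr; apply: sumr_ge0 => j _.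
  by rewrite trace_mulZr; apply: mulr_ge0.
- by move=> w; rewrite tens_rk1.
- exact: psdF.
Qed.

(* [k0] only witnesses [m > 0]: that factor carries the normalisation turning
    [rk1 (tensv w)] into a separable state. *)
Lemma block_positive_tensvP (k0 : 'I_m) (X : op R (idx d)) :
  block_positive X <-> herm X /\ forall w, 0 <= trace (opmul X (rk1 (tensv w))).
Proof.
split=> [[hermX X_ge0]|[hermX X_rk1]]; split=> //; last first.
  by move=> sigma sep_sigma _; apply: trace_separable_ge0.
move=> w; set W := tensv w; set N := \sum_a W a * (W a)^*.
have N_ge0 : 0 <= N by apply: sumr_ge0 => a _; apply: mulcJ_ge0.
have [N0|N_neq0] := eqVneq N 0; first by rewrite rk1_eq0 // trace_mul0r.
have N_gt0 : 0 < N by rewrite lt_def N_neq0.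
pose s := tens (dfwith (fun k => rk1 (w k)) (fun a b => N^-1 * rk1 (w k0) a b)).
have es : s = fun a b => N^-1 * rk1 W a b.
  apply: op_ext => a b; rewrite /s tens_dfwith -tens_rk1 /tens.
  by rewrite [X in _ = _ * X](bigD1 k0) //= [RHS]mulrA.
have sep_s : separable s.
  apply: separable_tens; apply: psd_dfwith => [k|]; first exact: psd_rk1.
  by apply: psd_scale; [rewrite invr_ge0 | apply: psd_rk1].
have state_s : is_state s.
  rewrite es; split; first by apply: psd_scale; [rewrite invr_ge0 | apply: psd_rk1].
  by rewrite /trace -mulr_sumr mulVf.
have := X_ge0 s sep_s state_s; rewrite es trace_mulZr pmulr_rge0 //.
by rewrite invr_gt0.
Qed.

End BlockPositivity.

Section Discrimination.
Variable R : realType.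
Variables (m : nat) (d : 'I_m -> nat) (n : nat).
Variables (eta : 'I_n -> R) (rho : 'I_n -> op R (idx d)) (x : 'I_n).

Definition weighted_diff (i : 'I_n) : op R (idx d) :=
  fun a b => (eta x)%:C * rho x a b - (eta i)%:C * rho i a b.

Lemma herm_weighted_diff i : herm (rho x) -> herm (rho i) -> herm (weighted_diff i).
Proof. by move=> hx hi a b; rewrite /weighted_diff hx hi rmorphB !rmorphM /= !oppr0. Qed.

Lemma success_leaf :
  trace (rho x) = 1 -> success eta rho (locc_effect (LLeaf R d x)) = (eta x)%:C.
Proof.
move=> tr1; rewrite /success (bigD1 x) //= eqxx trace_mul1r tr1 mulr1 big1 ?addr0 //.
by move=> i /negbTE; rewrite eq_sym => ->; rewrite trace_mul0r mulr0.
Qed.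

(* [success = eta_x - sum_i Tr((eta_x rho_x - eta_i rho_i) M_i)] for every
    measurement. *)
Lemma success_separable_le (k0 : 'I_m) (M : 'I_n -> op R (idx d)) r :
  trace (rho x) = 1 -> (forall i, block_positive (weighted_diff i)) ->
  opsum M = @op1 R (idx d) -> (forall i, separable (M i)) ->
  success eta rho M = r%:C -> r <= eta x.
Proof.
move=> tr1 bp sumM sepM.
have success_i i : (eta i)%:C * trace (opmul (rho i) (M i)) =
    (eta x)%:C * trace (opmul (rho x) (M i)) - trace (opmul (weighted_diff i) (M i)).
  by rewrite trace_mulBl; ring.
rewrite /success; under eq_bigr do rewrite success_i.
rewrite sumrB -mulr_sumr -trace_mul_opsumr sumM trace_mul1r tr1 mulr1 => succ_r.
rewrite -lecR -succ_r gerBl; apply: sumr_ge0 => i _.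
have /(block_positive_tensvP k0) [_ rk1_ge0] := bp i.
exact: trace_separable_ge0.
Qed.

End Discrimination.

Section ProjectiveProtocol.
Variable R : realType.

Lemma projector_opsub1 (I : finType) (P : op R I) : adj P = P -> opmul P P = P ->
  adj (opsub (@op1 R I) P) = opsub (@op1 R I) P /\
  opmul (opsub (@op1 R I) P) (opsub (@op1 R I) P) = opsub (@op1 R I) P.
Proof.
move=> adjP PP; split.
  apply: op_ext => a b; rewrite /adj /opsub rmorphB /= conjc_nat eq_sym.
  by have := congr1 (fun f => f a b) adjP; rewrite /adj => ->.
have PPab a b : \sum_l P a l * P l b = P a b by have := congr1 (fun f => f a b) PP.
have P1ab a b : \sum_l (@op1 R I) a l * P l b = P a b.
  by have := congr1 (fun f => f a b) (opmul1l P).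
have P1ba a b : \sum_l P a l * (@op1 R I) l b = P a b.
  by have := congr1 (fun f => f a b) (opmul1r P).
have oneab a b : \sum_l (@op1 R I) a l * (@op1 R I) l b = (@op1 R I) a b.
  by have := congr1 (fun f => f a b) (opmul1l (@op1 R I)).
apply: op_ext => a b; rewrite /opmul /opsub.
transitivity (\sum_l ((@op1 R I) a l * (@op1 R I) l b - (@op1 R I) a l * P l b
   - P a l * (@op1 R I) l b + P a l * P l b)).
  by apply: eq_bigr => l _; ring.
by rewrite !big_split /= !sumrN PPab P1ab P1ba oneab; ring.
Qed.

Variables (m : nat) (d : 'I_m -> nat) (n : nat) (x i0 : 'I_n).
Variable P : forall k : 'I_m, op R 'I_(d k).
Arguments P : clear implicits.
Hypothesis adjP : forall k, adj (P k) = P k.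
Hypothesis PP : forall k, opmul (P k) (P k) = P k.
Hypothesis x_neq_i0 : x != i0.

Definition proj_kraus (k : 'I_m) (j : 'I_2) : op R 'I_(d k) :=
  if j == ord0 then P k else opsub (@op1 R _) (P k).
Arguments proj_kraus : clear implicits.

Fixpoint proj_protocol (ks : seq 'I_m) : locc_proto R d n :=
  match ks with
  | [::] => LLeaf R d i0
  | k :: ks' => LNode (proj_kraus k)
      (fun j : 'I_2 => if j == ord0 then proj_protocol ks' else LLeaf R d x)
  end.

Definition tens_proj (ks : seq 'I_m) : op R (idx d) :=
  tens (fun k => if k \in ks then P k else @op1 R 'I_(d k)).

Lemma proj_protocol_valid ks : locc_valid (proj_protocol ks).
Proof.
elim: ks => [|k ks IH] //=; split; last by move=> j; case: ifP.
have [adjQ QQ] := projector_opsub1 (adjP k) (PP k).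
apply: op_ext => a b; rewrite /opsum big_ord_recl big_ord1 /proj_kraus /=.
by rewrite adjP PP adjQ QQ /opsub subrKC.
Qed.

Lemma opconj_tens_proj k ks : k \notin ks ->
  opconj (embed (P k)) (tens_proj ks) = tens_proj (k :: ks).
Proof.
move=> kks; rewrite /tens_proj opconj_embed_tens (negbTE kks) opmul1l adjP PP.
congr tens; apply: boolp.functional_extensionality_dep => l.
have [<-|kl] := eqVneq k l; first by rewrite dfwith_in in_cons eqxx.
by rewrite dfwith_out // in_cons eq_sym (negbTE kl).
Qed.

Lemma opconj_compl_tens_proj k ks : k \notin ks ->
  (fun a b => opconj (embed (P k)) (opsub (@op1 R (idx d)) (tens_proj ks)) a b +
              opconj (embed (opsub (@op1 R _) (P k))) (@op1 R (idx d)) a b) =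
  opsub (@op1 R (idx d)) (tens_proj (k :: ks)).
Proof.
move=> kks; have [adjQ QQ] := projector_opsub1 (adjP k) (PP k).
rewrite opconj_sub opconj_tens_proj // !opconj_embed_op1 adjP PP adjQ QQ.
apply: op_ext => a b; rewrite /opsub !tens_dfwith.
have -> : @op1 R (idx d) a b =
    @op1 R _ (a k) (b k) * \prod_(l | l != k) @op1 R 'I_(d l) (a l) (b l).
  by rewrite -tens_ones /tens (bigD1 k).
by rewrite /opsub; ring.
Qed.

Lemma proj_protocol_effect ks : uniq ks -> forall i,
  locc_effect (proj_protocol ks) i =
  if i == i0 then tens_proj ks
  else if i == x then opsub (@op1 R (idx d)) (tens_proj ks) else @op0 R (idx d).
Proof.
elim: ks => [|k ks IH] /=.
  move=> _ i; have -> : tens_proj [::] = @op1 R (idx d) by rewrite -tens_ones.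
  have [//|_] := eqVneq i i0; have [_|//] := eqVneq i x.
  by apply: op_ext => a b; rewrite /opsub subrr.
move=> /andP[kks uniq_ks] i.
have opsum2 (F : 'I_2 -> op R (idx d)) :
    opsum F = fun a b => F ord0 a b + F (lift ord0 ord0) a b.
  by apply: op_ext => a b; rewrite /opsum big_ord_recl big_ord1.
rewrite opsum2 /= /proj_kraus /= IH //.
have [->|_] := eqVneq i i0.
  rewrite (negbTE x_neq_i0) opconj0 opconj_tens_proj //.
  by apply: op_ext => a b; rewrite addr0.
have [_|_] := eqVneq i x; first exact: opconj_compl_tens_proj.
by rewrite !opconj0; apply: op_ext => a b; rewrite addr0.
Qed.

Lemma tens_proj_enum : tens_proj (enum 'I_m) = tens P.
Proof.
by congr tens; apply: boolp.functional_extensionality_dep => k; rewrite mem_enum.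
Qed.

Lemma success_proj_protocol (eta : 'I_n -> R) (rho : 'I_n -> op R (idx d)) :
  trace (rho x) = 1 ->
  success eta rho (locc_effect (proj_protocol (enum 'I_m))) =
  (eta x)%:C - trace (opmul (weighted_diff eta rho x i0) (tens P)).
Proof.
move=> tr1; have effect := proj_protocol_effect (enum_uniq 'I_m).
rewrite /success (bigD1 i0) //= (bigD1 x) //= big1 ?addr0; last first.
  move=> i /andP[i_neq_i0 i_neq_x].
  by rewrite effect (negbTE i_neq_i0) (negbTE i_neq_x) trace_mul0r mulr0.
rewrite !effect eqxx (negbTE x_neq_i0) eqxx trace_mul_sub1r tr1 tens_proj_enum.
by rewrite trace_mulBl; ring.
Qed.

End ProjectiveProtocol.

Lemma sup_eq_max (R : realType) (S : set R) a :
  S a -> (forall r, S r -> r <= a) -> sup S = a.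
Proof.
move=> Sa ub; have supS : has_sup S by split; [exists a | exists a => r /ub].
apply: le_anti; apply/andP; split; last exact: sup_upper_bound.
by apply: ge_sup; [exists a | move=> r /ub].
Qed.

Section LoccOptimality.
Variable R : realType.
Variables (m : nat) (d : 'I_m -> nat) (n : nat).
Variables (eta : 'I_n -> R) (rho : 'I_n -> op R (idx d)) (x : 'I_n).
Hypothesis ens : ensemble eta rho.

(* [sup] is [0] on sets without a supremum, hence the hypothesis [p_L != 0]. *)
Lemma success_le_p_L M r : p_L eta rho != 0 -> locc_measurement M ->
  success eta rho M = r%:C -> r <= p_L eta rho.
Proof.
move=> pL_neq0 LM succ_r; apply: sup_upper_bound; last by exists M.
by apply: boolp.contrapT => no_sup; move: pL_neq0; rewrite /p_L sup_out // eqxx.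
Qed.

(* Measuring the projections onto the [w k] in turn and guessing [i] only when
    all of them click succeeds with probability [eta_x - Tr(X_i P)], where [P]
    is the projection onto [tensv w]; this cannot beat [p_L = eta_x]. *)
Lemma weighted_diff_tensv_ge0 i w : p_L eta rho = eta x ->
  0 <= trace (opmul (weighted_diff eta rho x i) (rk1 (tensv w))).
Proof.
have [eta_gt0 [_ state_rho]] := ens; move=> pL_eq.
have [<-|x_neq_i] := eqVneq x i; first by rewrite trace_mulBl subrr.
pose N k := \sum_a w k a * (w k a)^*.
have [[k Nk0]|N_neq0] := boolp.pselect (exists k, N k = 0).
  by rewrite -tens_rk1 (tens_eq0 (k := k)) ?trace_mul0r // rk1_eq0.
have {}N_neq0 k : N k != 0 by apply/eqP => Nk0; apply: N_neq0; exists k.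
pose P k : op R 'I_(d k) := fun a b => (N k)^-1 * rk1 (w k) a b.
have [adjP PP] : (forall k, adj (P k) = P k) /\ (forall k, opmul (P k) (P k) = P k).
  by split=> k; case: (projector_normalized_rk1 (erefl (N k)) (N_neq0 k)).
have N_gt0 k : 0 < N k by rewrite lt_def N_neq0 sumr_ge0 // => a _; apply: mulcJ_ge0.
set c := \prod_k (N k)^-1; set v := trace _.
have c_gt0 : 0 < c by apply: prodr_gt0 => k _; rewrite invr_gt0.
have tensP : tens P = fun a b => c * rk1 (tensv w) a b.
  by apply: op_ext => a b; rewrite -tens_rk1 /tens -big_split.
have succ := success_proj_protocol adjP PP x_neq_i eta (proj2 (state_rho x)).
rewrite tensP trace_mulZr -/v in succ.
have cv_real : c * v \is Num.real.
  have [[herm_x _] _] := state_rho x; have [[herm_i _] _] := state_rho i.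
  apply: rpredM; first exact: gtr0_real.
  by apply: trace_mul_herm_real; [apply: herm_weighted_diff | case: (psd_rk1 (tensv w))].
have succ_r : success eta rho (locc_effect (proj_protocol x i P (enum 'I_m))) =
    (eta x - complex.Re (c * v))%:C by rewrite succ rmorphB /= RRe_real.
have LM : locc_measurement (locc_effect (proj_protocol x i P (enum 'I_m))).
  exists (proj_protocol x i P (enum 'I_m)); split => //.
  exact: proj_protocol_valid adjP PP _.
have pL_neq0 : p_L eta rho != 0 by rewrite pL_eq lt0r_neq0.
have := success_le_p_L pL_neq0 LM succ_r; rewrite pL_eq gerBl -lecR RRe_real //.
by rewrite -(pmulr_rge0 v c_gt0).
Qed.

Lemma block_positive_of_p_L (k0 : 'I_m) : p_L eta rho = eta x ->
  forall i, block_positive (weighted_diff eta rho x i).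
Proof.
have [_ [_ state_rho]] := ens; move=> pL_eq i.
apply/(block_positive_tensvP k0); split=> [|w]; last exact: weighted_diff_tensv_ge0.
by apply: herm_weighted_diff; [case: (state_rho x) => -[] | case: (state_rho i) => -[]].
Qed.

Lemma sup_success_eq (k0 : 'I_m) (Meas : ('I_n -> op R (idx d)) -> Prop) :
  (forall i, block_positive (weighted_diff eta rho x i)) ->
  Meas (locc_effect (LLeaf R d x)) ->
  (forall M, Meas M -> opsum M = @op1 R (idx d) /\ forall i, separable (M i)) ->
  sup [set r : R | exists M, Meas M /\ success eta rho M = r%:C]%classic = eta x.
Proof.
have [_ [_ state_rho]] := ens; have tr1 := proj2 (state_rho x).
move=> bp Meas_leaf Meas_sep; apply: sup_eq_max.
  by exists (locc_effect (LLeaf R d x)); split => //; apply: success_leaf.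
move=> r [M [/Meas_sep [sumM sepM] succ_r]].
exact: success_separable_le k0 _ _ tr1 bp sumM sepM succ_r.
Qed.

Lemma p_L_eq_of_block_positive (k0 : 'I_m) :
  (forall i, block_positive (weighted_diff eta rho x i)) -> p_L eta rho = eta x.
Proof.
move=> bp; apply: (sup_success_eq k0 bp); first by exists (LLeaf R d x).
move=> M [p [valid_p effect_p]]; have -> : M = locc_effect p by apply: boolp.funext.
by split; [apply: locc_effect_opsum | apply: locc_effect_separable].
Qed.

Lemma p_SEP_eq_of_block_positive (k0 : 'I_m) :
  (forall i, block_positive (weighted_diff eta rho x i)) -> p_SEP eta rho = eta x.
Proof.
move=> bp; apply: (sup_success_eq k0 bp) => [|M [[_ sumM] sepM] //].
split; last exact: locc_effect_separable.
split; last exact: locc_effect_opsum.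
by move=> i /=; case: eqP => _; [apply: psd_op1 | apply: psd_op0].
Qed.

End LoccOptimality.

Theorem theorem1 (R : realType) (m : nat) (d : 'I_m -> nat) (n : nat)
  (eta : 'I_n -> R) (rho : 'I_n -> op R (idx d)) (x : 'I_n) :
  (2 <= m)%N -> (forall k, (2 <= d k)%N) -> ensemble eta rho ->
  (p_L eta rho = eta x <->
     forall i : 'I_n,
       block_positive (fun a b => (eta x)%:C * rho x a b - (eta i)%:C * rho i a b))
  /\ (p_L eta rho = eta x -> p_L eta rho = p_SEP eta rho).
Proof.
move=> m_ge2 _ ens.
have k0 : 'I_m := Ordinal (leq_trans (isT : 0 < 2)%N m_ge2).
have pL_eqP :
    p_L eta rho = eta x <-> forall i, block_positive (weighted_diff eta rho x i).
  split; [exact: block_positive_of_p_L | exact: p_L_eq_of_block_positive].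
split=> // pL_eq.
by rewrite (p_SEP_eq_of_block_positive ens k0 (pL_eqP.1 pL_eq)).
Qed.
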